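(* Let $G$ be a group acting geometrically (i.e.\ properly and cocompactly by isometries) on a CAT(0) space $X$. For every $g\in G$, $$\mathcal{F}_g = L(Z_g),$$ where $\mathcal{F}_g=\{\alpha\in\partial X \mid g\alpha=\alpha\}$ is the fixed-point set of $g$ in the boundary $\partial X$, $Z_g=\{v\in G\mid gv=vg\}$ is the centralizer of $g$, and $L(Z_g)$ is the limit set of $Z_g$ in $\partial X$.
   Context: A CAT(0) space admitting a geometric group action is proper. For a proper CAT(0) space $X$, $\partial X$ denotes its visual boundary: the set of asymptotic classes of geodesic rays (two rays $\xi,\zeta$ are asymptotic if $\sup_{t\ge0}d(\xi(t),\zeta(t))<\infty$), with the cone topology, which makes $X\cup\partial X$ a compact metrizable space containing $X$ as an open dense subspace. An isometry $g$ of $X$ acts on $\partial X$ by $g(\xi(\infty))=(g\circ\xi)(\infty)$. For a subset $A\subset G$, the limit set is $L(A)=\overline{Ax_0}\cap\partial X$, where $x_0\in X$ and the closure of the orbit $Ax_0$ is taken in $X\cup\partial X$; this does not depend on the choice of $x_0$. *)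

From Stdlib Require Import Reals List.
Open Scope R_scope.

Definition is_metric {X : Type} (d : X -> X -> R) : Prop :=
  (forall x y, d x y = 0 <-> x = y) /\
  (forall x y, d x y = d y x) /\
  (forall x y z, d x z <= d x y + d y z).

(** Convergence of a sequence and sequential compactness of a subset
    (equivalent to compactness in a metric space). *)
Definition seq_converges {X : Type} (d : X -> X -> R) (u : nat -> X) (l : X) : Prop :=
  forall eps, 0 < eps -> exists N, forall n, (N <= n)%nat -> d (u n) l < eps.

Definition compact_set {X : Type} (d : X -> X -> R) (K : X -> Prop) : Prop :=
  forall u : nat -> X, (forall n, K (u n)) ->
  exists (phi : nat -> nat) (l : X),
    (forall n, (phi n < phi (S n))%nat) /\ K l /\ seq_converges d (fun n => u (phi n)) l.

Definition proper_space {X : Type} (d : X -> X -> R) : Prop :=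
  forall x r, compact_set d (fun y => d x y <= r).

Definition geodesic_segment {X : Type} (d : X -> X -> R) (gam : R -> X) (L : R)
  (x y : X) : Prop :=
  0 <= L /\ gam 0 = x /\ gam L = y /\
  forall s t, 0 <= s <= L -> 0 <= t <= L -> d (gam s) (gam t) = Rabs (s - t).

Definition geodesic_space {X : Type} (d : X -> X -> R) : Prop :=
  forall x y, exists gam, geodesic_segment d gam (d x y) x y.

Definition edist (p q : R * R) : R :=
  sqrt ((fst p - fst q)^2 + (snd p - snd q)^2).

(** [p] lies on the side [gam] (geodesic from [A] to [B] of length [L]) and
    [pb] is its comparison point on the segment [Ab,Bb] of the comparison
    triangle. *)
Definition on_side {X : Type} (gam : R -> X) (L : R) (Ab Bb : R * R)
  (p : X) (pb : R * R) : Prop :=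
  exists s, 0 <= s <= L /\ p = gam s /\ edist Ab pb = s /\ edist pb Bb = L - s.

Definition CAT0_ineq {X : Type} (d : X -> X -> R) : Prop :=
  forall (x y z : X) (g1 g2 g3 : R -> X) (xb yb zb : R * R),
    geodesic_segment d g1 (d x y) x y ->
    geodesic_segment d g2 (d y z) y z ->
    geodesic_segment d g3 (d z x) z x ->
    edist xb yb = d x y -> edist yb zb = d y z -> edist zb xb = d z x ->
    forall p pb q qb,
      (on_side g1 (d x y) xb yb p pb \/ on_side g2 (d y z) yb zb p pb \/
       on_side g3 (d z x) zb xb p pb) ->
      (on_side g1 (d x y) xb yb q qb \/ on_side g2 (d y z) yb zb q qb \/
       on_side g3 (d z x) zb xb q qb) ->
      d p q <= edist pb qb.

Definition CAT0_space {X : Type} (d : X -> X -> R) : Prop :=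
  is_metric d /\ geodesic_space d /\ CAT0_ineq d.

Definition geodesic_ray {X : Type} (d : X -> X -> R) (xi : R -> X) : Prop :=
  forall s t, 0 <= s -> 0 <= t -> d (xi s) (xi t) = Rabs (s - t).

(** A boundary point is the asymptotic class of a ray; we represent boundary
    points by rays and all boundary notions below are class-invariant. *)
Definition asymptotic {X : Type} (d : X -> X -> R) (xi zeta : R -> X) : Prop :=
  exists C, forall t, 0 <= t -> d (xi t) (zeta t) <= C.

Definition is_group {G : Type} (mul : G -> G -> G) (inv : G -> G) (one : G) : Prop :=
  (forall a b c, mul a (mul b c) = mul (mul a b) c) /\
  (forall a, mul one a = a) /\ (forall a, mul a one = a) /\
  (forall a, mul (inv a) a = one) /\ (forall a, mul a (inv a) = one).

Definition isometric_action {G X : Type} (d : X -> X -> R)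
  (mul : G -> G -> G) (one : G) (act : G -> X -> X) : Prop :=
  (forall x, act one x = x) /\
  (forall g h x, act (mul g h) x = act g (act h x)) /\
  (forall g x y, d (act g x) (act g y) = d x y).

Definition proper_action {G X : Type} (d : X -> X -> R) (act : G -> X -> X) : Prop :=
  forall x, exists r, 0 < r /\ exists l : list G,
    forall g, (exists y, d x y < r /\ d x (act g y) < r) -> In g l.

Definition cocompact_action {G X : Type} (d : X -> X -> R) (act : G -> X -> X) : Prop :=
  exists K, compact_set d K /\ forall x, exists g y, K y /\ x = act g y.

Definition geometric_action {G X : Type} (d : X -> X -> R)
  (mul : G -> G -> G) (one : G) (act : G -> X -> X) : Prop :=
  isometric_action d mul one act /\ proper_action d act /\ cocompact_action d act.

(** Boundary action: g . xi(oo) = (g o xi)(oo); so g fixes the boundary point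
    represented by xi iff g o xi is asymptotic to xi. *)
Definition fixes_boundary_point {G X : Type} (d : X -> X -> R)
  (act : G -> X -> X) (g : G) (xi : R -> X) : Prop :=
  asymptotic d (fun t => act g (xi t)) xi.

Definition centralizer {G : Type} (mul : G -> G -> G) (g : G) : G -> Prop :=
  fun v => mul g v = mul v g.

(** Limit set L(A) = closure(A x0) ∩ ∂X in the cone topology on X ∪ ∂X.
    The cone topology (Bridson–Haefliger II.8.6) has at c(oo) (c the ray from
    x0) the neighbourhood basis
      U(c,r,eps) = { z : d(x0,z) > r, d(p_r z, c r) < eps },
    p_r the projection to the closed ball B(x0,r); for z in X with d(x0,z)>r,
    p_r z is the point at distance r from x0 on the geodesic [x0,z].
    Thus the boundary point of xi lies in the closure of A x0 iff every
    U(c,r,eps) meets the orbit A x0. *)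
Definition in_limit_set {G X : Type} (d : X -> X -> R) (act : G -> X -> X)
  (x0 : X) (A : G -> Prop) (xi : R -> X) : Prop :=
  exists c : R -> X,
    geodesic_ray d c /\ c 0 = x0 /\ asymptotic d c xi /\
    forall r eps, 0 < r -> 0 < eps ->
      exists a, A a /\ r < d x0 (act a x0) /\
        exists sigma, geodesic_segment d sigma (d x0 (act a x0)) x0 (act a x0) /\
                      d (sigma r) (c r) < eps.

(* Everything rests on the CAT(0) comparison estimate for two geodesics issuing from a
   common point.  If [a] centralizes [g], then [g] moves [a x0] exactly as far as [x0],
   hence moves every point of a geodesic [x0, a x0] boundedly; the ray from [x0] that
   such geodesics approximate is then moved boundedly too, so its endpoint is fixed.
   Conversely, if [g] fixes [xi], cocompactness writes [xi n = h_n y_n] with [y_n] in a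
   compact set; the conjugates [h_n^-1 g h_n] move a base point boundedly, so by
   properness infinitely many of them coincide, and the elements [h_n h_m^-1] of the
   centralizer send [x0] within bounded distance of [xi n], which puts the endpoint of
   [xi] in the limit set. *)

From Stdlib Require Import Reals List Lra Psatz Classical ClassicalEpsilon Lia.
Open Scope R_scope.

Lemma eventually_ge_INR (A : R) : exists N : nat, forall n, (N <= n)%nat -> A <= INR n.
Proof.
  destruct (INR_unbounded A) as [N HN]. exists N. intros n Hn.
  apply le_INR in Hn. lra.
Qed.

Lemma strictly_increasing_ge (phi : nat -> nat) :
  (forall n, (phi n < phi (S n))%nat) -> forall n, (n <= phi n)%nat.
Proof. intros H n; induction n; [lia|]. specialize (H n). lia. Qed.

Lemma list_valued_infinitely_often {A : Type} (l : list A) (u : nat -> A) (I : nat) :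
  (forall i, (I <= i)%nat -> In (u i) l) ->
  exists a, forall N, exists i, (N <= i)%nat /\ u i = a.
Proof.
  revert I. induction l as [|a l IH]; intros I H.
  - destruct (H I (le_n _)).
  - destruct (classic (forall N, exists i, (N <= i)%nat /\ u i = a)) as [Ha|Ha].
    + exists a; auto.
    + apply not_all_ex_not in Ha. destruct Ha as [N HN].
      apply (IH (I + N)%nat). intros i Hi.
      destruct (H i ltac:(lia)) as [E|E]; auto.
      exfalso; apply HN. exists i. split; [lia|auto].
Qed.

Lemma edist_eq (p q : R * R) (v : R) :
  0 <= v -> (fst p - fst q) ^ 2 + (snd p - snd q) ^ 2 = v * v -> edist p q = v.
Proof. intros Hv E. unfold edist. rewrite E. apply sqrt_square, Hv. Qed.

Definition reverse_path {X : Type} (gam : R -> X) (L : R) : R -> X := fun s => gam (L - s).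

Lemma triangle_apex_exists L L' D : 0 < L -> 0 <= L' -> L <= L' + D -> L' <= L + D -> D <= L + L' ->
  exists X0 Y0, X0 ^ 2 + Y0 ^ 2 = L' ^ 2 /\ 2 * L * X0 = L ^ 2 + L' ^ 2 - D ^ 2.
Proof.
  intros HL HL' T1 T2 T3.
  set (X0 := (L ^ 2 + L' ^ 2 - D ^ 2) / (2 * L)).
  assert (HY : 0 <= L' ^ 2 - X0 ^ 2).
  { replace (L' ^ 2 - X0 ^ 2) with
      ((D ^ 2 - (L - L') ^ 2) * ((L + L') ^ 2 - D ^ 2) / (4 * L ^ 2)) by (unfold X0; field; lra).
    apply Rmult_le_pos; [|left; apply Rinv_0_lt_compat; nra].
    apply Rmult_le_pos; nra. }
  exists X0, (sqrt (L' ^ 2 - X0 ^ 2)). split.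
  - rewrite <- Rsqr_pow2 with (x := sqrt _), Rsqr_sqrt by exact HY. ring.
  - unfold X0. field. lra.
Qed.

Lemma triangle_apex_chord_sq L L' D X0 Y0 t : 0 < L' ->
  X0 ^ 2 + Y0 ^ 2 = L' ^ 2 -> 2 * L * X0 = L ^ 2 + L' ^ 2 - D ^ 2 ->
  ((t - t * X0 / L') ^ 2 + (0 - t * Y0 / L') ^ 2) * (L * L') = t ^ 2 * (D ^ 2 - (L - L') ^ 2).
Proof.
  intros HL' HXY HX.
  transitivity (t ^ 2 * L / L' * (X0 ^ 2 + Y0 ^ 2 - 2 * L' * X0 + L' ^ 2)); [field; lra|].
  rewrite HXY. transitivity (t ^ 2 * (2 * L * L' - 2 * L * X0)); [field; lra|].
  rewrite HX. ring.
Qed.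

Section Metric.
Context {X : Type} (d : X -> X -> R).
Hypothesis Hm : is_metric d.

Lemma dist_refl x : d x x = 0.
Proof. apply (proj1 Hm); reflexivity. Qed.

Lemma dist_sym x y : d x y = d y x.
Proof. apply (proj1 (proj2 Hm)). Qed.

Lemma dist_triangle x y z : d x z <= d x y + d y z.
Proof. apply (proj2 (proj2 Hm)). Qed.

Lemma dist_nonneg x y : 0 <= d x y.
Proof. pose proof (dist_triangle x y x) as H. rewrite dist_refl, (dist_sym y x) in H. lra. Qed.

Lemma converges_unique u l l' : seq_converges d u l -> seq_converges d u l' -> l = l'.
Proof.
  intros H1 H2. apply (proj1 Hm l l').
  destruct (Rle_lt_or_eq_dec _ _ (dist_nonneg l l')) as [Hlt|Heq]; [|lra].
  destruct (H1 (d l l' / 2)) as [N1 HN1]; [lra|].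
  destruct (H2 (d l l' / 2)) as [N2 HN2]; [lra|].
  specialize (HN1 (N1 + N2)%nat ltac:(lia)). specialize (HN2 (N1 + N2)%nat ltac:(lia)).
  pose proof (dist_triangle l (u (N1 + N2)%nat) l') as H.
  rewrite (dist_sym l (u _)) in H. lra.
Qed.

Lemma proper_cauchy_converges u : proper_space d ->
  (forall eps, 0 < eps -> exists N, forall n m, (N <= n)%nat -> (N <= m)%nat -> d (u n) (u m) < eps) ->
  exists l, seq_converges d u l.
Proof.
  intros Hp Hc.
  destruct (Hc 1 ltac:(lra)) as [N1 HN1].
  destruct (Hp (u N1) 1 (fun k => u (N1 + k)%nat)) as [phi [l [Hphi [_ Hl]]]].
  { intros k. left. apply HN1; lia. }
  exists l. intros eps He.
  destruct (Hc (eps / 2) ltac:(lra)) as [N HN].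
  destruct (Hl (eps / 2) ltac:(lra)) as [K HK].
  exists N. intros n Hn.
  pose proof (strictly_increasing_ge phi Hphi (K + N)).
  specialize (HK (K + N)%nat ltac:(lia)).
  specialize (HN n (N1 + phi (K + N))%nat Hn ltac:(lia)).
  pose proof (dist_triangle (u n) (u (N1 + phi (K + N))%nat) l). lra.
Qed.

(* Otherwise points [u n] of [K] with [d x (u n) > n] have no convergent subsequence. *)
Lemma compact_set_bounded K x : compact_set d K -> exists B, forall y, K y -> d x y <= B.
Proof.
  intros HK. apply NNPP. intro Hn.
  assert (Hfar : forall n : nat, exists y, K y /\ INR n < d x y).
  { intros n. apply NNPP; intro H. apply Hn. exists (INR n). intros y Hy.
    apply Rnot_lt_le. intro. apply H. exists y; auto. }
  destruct (choice _ Hfar) as [u Hu].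
  destruct (HK u (fun n => proj1 (Hu n))) as [phi [l [Hphi [_ Hl]]]].
  destruct (Hl 1 ltac:(lra)) as [N HN].
  destruct (INR_unbounded (d x l + 1)) as [M HM].
  specialize (HN (N + M)%nat ltac:(lia)).
  pose proof (proj2 (Hu (phi (N + M)%nat))).
  pose proof (strictly_increasing_ge phi Hphi (N + M)).
  assert (INR M <= INR (phi (N + M)%nat)) by (apply le_INR; lia).
  pose proof (dist_triangle x l (u (phi (N + M)%nat))) as T. rewrite (dist_sym l) in T. lra.
Qed.

Lemma segment_length gam L x y : geodesic_segment d gam L x y -> d x y = L.
Proof.
  intros [HL [H0 [H1 H]]]. subst. rewrite H; try lra. rewrite Rabs_left1; lra.
Qed.

Lemma segment_dist gam L x y s t : geodesic_segment d gam L x y ->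
  0 <= s <= L -> 0 <= t <= L -> d (gam s) (gam t) = Rabs (s - t).
Proof. intros [_ [_ [_ H]]]. apply H. Qed.

Lemma segment_reverse gam L x y :
  geodesic_segment d gam L x y -> geodesic_segment d (reverse_path gam L) L y x.
Proof.
  intros [HL [H0 [H1 H]]]. unfold reverse_path. repeat split; auto.
  - rewrite Rminus_0_r. exact H1.
  - rewrite Rminus_diag. exact H0.
  - intros s t Hs Ht. rewrite H by lra. rewrite <- Rabs_Ropp. f_equal. ring.
Qed.

Lemma segment_restrict gam L x y r :
  geodesic_segment d gam L x y -> 0 <= r <= L -> geodesic_segment d gam r x (gam r).
Proof.
  intros [HL [H0 [H1 H]]] Hr. repeat split; auto; try lra.
  intros s t Hs Ht. apply H; lra.
Qed.

Lemma segment_isometry (f : X -> X) gam L x y :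
  (forall u v, d (f u) (f v) = d u v) ->
  geodesic_segment d gam L x y -> geodesic_segment d (fun t => f (gam t)) L (f x) (f y).
Proof.
  intros Hf [HL [H0 [H1 H]]]. repeat split; auto; try congruence.
  intros s t Hs Ht. rewrite Hf; auto.
Qed.

Lemma ray_segment xi L : geodesic_ray d xi -> 0 <= L -> geodesic_segment d xi L (xi 0) (xi L).
Proof. intros H HL. repeat split; auto. intros s t Hs Ht. apply H; lra. Qed.

Lemma ray_dist xi s t : geodesic_ray d xi -> 0 <= s <= t -> d (xi s) (xi t) = t - s.
Proof. intros H Hst. rewrite H by lra. rewrite Rabs_left1; lra. Qed.

Hypothesis Hgeod : geodesic_space d.
Hypothesis Hcat : CAT0_ineq d.

(* Comparison triangle (0,0), (L,0), (X0,Y0) for (p, a, b): the points [s1 t] and [s2 t]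
   correspond to (t,0) and (t/L') (X0,Y0). *)
Lemma cat0_common_origin p a b s1 s2 L L' t :
  geodesic_segment d s1 L p a -> geodesic_segment d s2 L' p b ->
  0 < L -> 0 < L' -> 0 <= t <= L -> t <= L' ->
  d (s1 t) (s2 t) ^ 2 * (L * L') <= t ^ 2 * (d a b ^ 2 - (L - L') ^ 2).
Proof.
  intros H1 H2 HL HL' Ht HtL'.
  pose proof (segment_length _ _ _ _ H1) as E1.
  pose proof (segment_length _ _ _ _ H2) as E2.
  assert (E3 : d b p = L') by (rewrite dist_sym; exact E2).
  set (D := d a b).
  assert (T1 : D <= L + L').
  { pose proof (dist_triangle a p b). rewrite (dist_sym a p) in H. unfold D; lra. }
  assert (T2 : L <= L' + D).
  { pose proof (dist_triangle p b a). rewrite (dist_sym b a) in H. unfold D; lra. }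
  assert (T3 : L' <= L + D) by (pose proof (dist_triangle p a b); unfold D; lra).
  destruct (triangle_apex_exists L L' D HL ltac:(lra) T2 T3 T1) as [X0 [Y0 [HXY HX]]].
  destruct (Hgeod a b) as [rho Hrho].
  pose proof (Hcat p a b s1 rho (reverse_path s2 L') (0, 0) (L, 0) (X0, Y0)) as Hcmp.
  rewrite E1, E3 in Hcmp. fold D in Hcmp.
  specialize (Hcmp H1 Hrho (segment_reverse _ _ _ _ H2)).
  assert (Hd : d (s1 t) (s2 t) <= edist (t, 0) (t * X0 / L', t * Y0 / L')).
  { apply Hcmp; try (apply edist_eq; cbn; nra).
    - left. exists t. repeat split; try lra; apply edist_eq; cbn; lra.
    - right; right. exists (L' - t). repeat split; try lra.
      + unfold reverse_path. f_equal. ring.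
      + apply edist_eq; cbn; [lra|].
        transitivity ((X0 ^ 2 + Y0 ^ 2) * ((L' - t) / L') ^ 2); [field; lra|].
        rewrite HXY. field. lra.
      + apply edist_eq; cbn; [lra|].
        transitivity ((X0 ^ 2 + Y0 ^ 2) * (t / L') ^ 2); [field; lra|].
        rewrite HXY. field. lra. }
  set (v := (t - t * X0 / L') ^ 2 + (0 - t * Y0 / L') ^ 2) in *.
  pose proof (triangle_apex_chord_sq L L' D X0 Y0 t ltac:(lra) HXY HX) as Hv. fold v in Hv.
  assert (Hsq : edist (t, 0) (t * X0 / L', t * Y0 / L') ^ 2 = v).
  { unfold edist. cbn [fst snd]. rewrite <- Rsqr_pow2, Rsqr_sqrt; [reflexivity|].
    unfold v. apply Rplus_le_le_0_compat; apply pow2_ge_0. }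
  pose proof (dist_nonneg (s1 t) (s2 t)).
  rewrite <- Hv, <- Hsq. apply Rmult_le_compat_r; [nra|].
  apply pow_incr. lra.
Qed.

Lemma cat0_common_origin_le p a b s1 s2 L L' t :
  geodesic_segment d s1 L p a -> geodesic_segment d s2 L' p b ->
  0 <= t <= L -> t <= L' -> d (s1 t) (s2 t) <= d a b.
Proof.
  intros H1 H2 Ht HtL'.
  destruct (Req_dec t 0) as [->|Ht0].
  - destruct H1 as [_ [-> _]]. destruct H2 as [_ [-> _]]. rewrite dist_refl. apply dist_nonneg.
  - pose proof (cat0_common_origin p a b s1 s2 L L' t H1 H2 ltac:(lra) ltac:(lra) Ht HtL') as Hc.
    pose proof (dist_nonneg (s1 t) (s2 t)). pose proof (dist_nonneg a b).
    assert (Hsq : d (s1 t) (s2 t) ^ 2 <= d a b ^ 2).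
    { apply (Rmult_le_reg_r (L * L')); [nra|].
      assert (t ^ 2 <= L * L') by nra.
      assert (t ^ 2 * (d a b ^ 2 - (L - L') ^ 2) <= t ^ 2 * d a b ^ 2).
      { apply Rmult_le_compat_l; [apply pow2_ge_0|]. pose proof (pow2_ge_0 (L - L')). lra. }
      assert (t ^ 2 * d a b ^ 2 <= L * L' * d a b ^ 2) by nra.
      nra. }
    nra.
Qed.

Lemma segments_limit_ray (sg : nat -> R -> X) (Ls : nat -> R) (ys : nat -> X) x0 c :
  (forall n, geodesic_segment d (sg n) (Ls n) x0 (ys n)) ->
  (forall T, exists N, forall n, (N <= n)%nat -> T <= Ls n) ->
  (forall t, 0 <= t -> seq_converges d (fun n => sg n t) (c t)) ->
  geodesic_ray d c /\ c 0 = x0.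
Proof.
  intros Hsg Hlen Hc. split.
  - intros s t Hs Ht.
    assert (Hnear : forall eps, 0 < eps -> exists n, s <= Ls n /\ t <= Ls n /\
              d (sg n s) (c s) < eps /\ d (sg n t) (c t) < eps).
    { intros eps He. destruct (Hc s Hs eps He) as [N1 H1]. destruct (Hc t Ht eps He) as [N2 H2].
      destruct (Hlen (Rmax s t)) as [N3 H3].
      exists (N1 + N2 + N3)%nat. specialize (H3 (N1 + N2 + N3)%nat ltac:(lia)).
      pose proof (Rmax_l s t). pose proof (Rmax_r s t).
      repeat split; try lra; [apply H1 | apply H2]; lia. }
    apply Rle_antisym; apply Rle_plus_epsilon; intros eps He;
      destruct (Hnear (eps / 2) ltac:(lra)) as [n [Hsn [Htn [Cs Ct]]]];
      pose proof (segment_dist _ _ _ _ s t (Hsg n) ltac:(lra) ltac:(lra)) as Hst.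
    + pose proof (dist_triangle (c s) (sg n s) (c t)) as T1.
      pose proof (dist_triangle (sg n s) (sg n t) (c t)) as T2.
      rewrite (dist_sym (c s) (sg n s)) in T1. lra.
    + pose proof (dist_triangle (sg n s) (c s) (sg n t)) as T1.
      pose proof (dist_triangle (c s) (c t) (sg n t)) as T2.
      rewrite (dist_sym (c t) (sg n t)) in T2. lra.
  - apply (converges_unique (fun n => sg n 0)); [apply Hc; lra|].
    intros eps He. exists 0%nat. intros n _. destruct (Hsg n) as [_ [-> _]].
    rewrite dist_refl. exact He.
Qed.

Section RayFromPoint.
Variables (xi : R -> X) (x0 : X) (sg : nat -> R -> X).
Hypothesis Hxi : geodesic_ray d xi.
Hypothesis Hsg : forall n : nat, geodesic_segment d (sg n) (d x0 (xi (INR n))) x0 (xi (INR n)).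

Lemma ray_segment_length_near n :
  INR n - d x0 (xi 0) <= d x0 (xi (INR n)) <= INR n + d x0 (xi 0).
Proof.
  pose proof (ray_dist xi 0 (INR n) Hxi ltac:(split; [lra | apply pos_INR])).
  pose proof (dist_triangle x0 (xi 0) (xi (INR n))).
  pose proof (dist_triangle (xi 0) x0 (xi (INR n))) as T. rewrite (dist_sym (xi 0) x0) in T. lra.
Qed.

Lemma segments_cauchy_estimate t n m : 0 <= t -> (n <= m)%nat ->
  2 * d x0 (xi 0) + t + 1 <= INR n ->
  d (sg n t) (sg m t) ^ 2 * INR n <= 24 * (d x0 (xi 0) + 1) * t ^ 2.
Proof.
  intros Ht Hnm Hn.
  assert (Hnm' : INR n <= INR m) by (apply le_INR; exact Hnm).
  pose proof (ray_segment_length_near n) as Bn. pose proof (ray_segment_length_near m) as Bm.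
  pose proof (dist_nonneg x0 (xi 0)) as Hb.
  set (b := d x0 (xi 0)) in *.
  set (Ln := d x0 (xi (INR n))) in *. set (Lm := d x0 (xi (INR m))) in *.
  assert (Hx : d (xi (INR n)) (xi (INR m)) = INR m - INR n)
    by (apply ray_dist; [exact Hxi | split; [apply pos_INR | lra]]).
  pose proof (cat0_common_origin _ _ _ _ _ Ln Lm t (Hsg n) (Hsg m)
    ltac:(lra) ltac:(lra) ltac:(split; lra) ltac:(lra)) as Hc.
  rewrite Hx in Hc. fold Ln Lm in Hc.
  assert (T1 : Lm - Ln <= INR m - INR n).
  { pose proof (dist_triangle x0 (xi (INR n)) (xi (INR m))). unfold Ln, Lm. lra. }
  assert (T2 : Ln - Lm <= INR m - INR n).
  { pose proof (dist_triangle x0 (xi (INR m)) (xi (INR n))) as T.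
    rewrite (dist_sym (xi (INR m))), Hx in T. unfold Ln, Lm. lra. }
  (* The defect factors as a product of a term at most [2b] and one at most [2m + 2b]. *)
  assert (Hdef : (INR m - INR n) ^ 2 - (Ln - Lm) ^ 2 <= 6 * (b + 1) * INR m).
  { set (a1 := INR m - INR n - (Lm - Ln)). set (a2 := INR m - INR n + (Lm - Ln)).
    replace ((INR m - INR n) ^ 2 - (Ln - Lm) ^ 2) with (a1 * a2) by (unfold a1, a2; ring).
    assert (0 <= a1 <= 2 * b) by (unfold a1; lra).
    assert (0 <= a2 <= 2 * INR m + 2 * b) by (unfold a2; lra).
    assert (a1 * a2 <= 2 * b * (2 * INR m + 2 * b)) by nra.
    nra. }
  pose proof (pow2_ge_0 (d (sg n t) (sg m t))) as Hd2.
  assert (Hprod : INR n * INR m <= 4 * (Ln * Lm)).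
  { assert (INR n / 2 <= Ln) by lra. assert (INR m / 2 <= Lm) by lra.
    pose proof (pos_INR n). nra. }
  apply (Rmult_le_reg_r (INR m)); [lra|].
  assert (d (sg n t) (sg m t) ^ 2 * (INR n * INR m) <= 4 * (d (sg n t) (sg m t) ^ 2 * (Ln * Lm)))
    by nra.
  assert (Hm0 : 0 < INR m) by lra.
  assert (t ^ 2 * ((INR m - INR n) ^ 2 - (Ln - Lm) ^ 2) <= t ^ 2 * (6 * (b + 1) * INR m))
    by (apply Rmult_le_compat_l; [apply pow2_ge_0 | exact Hdef]).
  nra.
Qed.

Lemma segments_converge t : proper_space d -> 0 <= t ->
  exists l, seq_converges d (fun n => sg n t) l.
Proof.
  intros Hp Ht. apply (proper_cauchy_converges _ Hp). intros eps He.
  pose proof (dist_nonneg x0 (xi 0)) as Hb.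
  set (K := 24 * (d x0 (xi 0) + 1) * t ^ 2).
  destruct (eventually_ge_INR (2 * d x0 (xi 0) + t + 1 + K / eps ^ 2)) as [N HN].
  assert (HK : 0 <= K / eps ^ 2).
  { apply Rmult_le_pos; [unfold K; nra | left; apply Rinv_0_lt_compat; nra]. }
  assert (Hclose : forall n m, (N <= n <= m)%nat -> d (sg n t) (sg m t) < eps).
  { intros n m Hnm. specialize (HN n ltac:(lia)).
    pose proof (segments_cauchy_estimate t n m Ht ltac:(lia) ltac:(lra)) as E. fold K in E.
    assert (Hlt : K < eps ^ 2 * INR n).
    { replace K with (K / eps ^ 2 * eps ^ 2) by (field; lra).
      rewrite (Rmult_comm (eps ^ 2)). apply Rmult_lt_compat_r; [nra | lra]. }
    assert (d (sg n t) (sg m t) ^ 2 < eps ^ 2) by (apply (Rmult_lt_reg_r (INR n)); lra).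
    pose proof (dist_nonneg (sg n t) (sg m t)). nra. }
  exists N. intros n m Hn Hm'. destruct (Nat.le_ge_cases n m).
  - apply Hclose; lia.
  - rewrite dist_sym. apply Hclose; lia.
Qed.

Lemma segments_limit_asymptotic c : geodesic_ray d c -> c 0 = x0 ->
  (forall t, 0 <= t -> seq_converges d (fun n => sg n t) (c t)) -> asymptotic d c xi.
Proof.
  intros Hc Hc0 Hconv. set (b := d x0 (xi 0)).
  exists (3 * b + 1). intros t Ht.
  assert (Hb : 0 <= b) by apply dist_nonneg.
  destruct (Rle_dec t b) as [Htb|Htb].
  - pose proof (dist_triangle (c t) x0 (xi t)) as T1.
    pose proof (dist_triangle x0 (xi 0) (xi t)) as T2.
    assert (d (c t) x0 = t) by (rewrite <- Hc0, dist_sym, ray_dist; auto; lra).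
    rewrite ray_dist in T2 by (auto; lra). fold b in T2. lra.
  - destruct (Hconv t Ht 1 ltac:(lra)) as [N1 HN1].
    destruct (eventually_ge_INR (t + b)) as [N2 HN2].
    specialize (HN1 (N1 + N2)%nat ltac:(lia)). specialize (HN2 (N1 + N2)%nat ltac:(lia)).
    cbn beta in HN1.
    pose proof (ray_segment_length_near (N1 + N2)) as Bm. fold b in Bm.
    pose proof (Hsg (N1 + N2)) as Hseg.
    set (M := INR (N1 + N2)) in *. set (Lm := d x0 (xi M)) in *.
    (* Read backwards from [xi M], the ray and the segment [sg] start together. *)
    pose proof (cat0_common_origin_le _ _ _ _ _ M Lm (M - t)
      (segment_reverse _ _ _ _ (ray_segment xi M Hxi ltac:(lra)))
      (segment_reverse _ _ _ _ Hseg) ltac:(split; lra) ltac:(lra)) as Hq.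
    unfold reverse_path in Hq. replace (M - (M - t)) with t in Hq by ring.
    rewrite (dist_sym (xi 0) x0) in Hq. fold b in Hq.
    pose proof (segment_dist _ _ _ _ t (Lm - (M - t)) Hseg ltac:(split; lra) ltac:(split; lra)) as Hs.
    assert (Rabs (t - (Lm - (M - t))) <= b) by (apply Rabs_le; lra).
    pose proof (dist_triangle (c t) (sg (N1 + N2)%nat t) (xi t)) as T1.
    pose proof (dist_triangle (sg (N1 + N2)%nat t) (sg (N1 + N2)%nat (Lm - (M - t))) (xi t)) as T2.
    rewrite (dist_sym (c t) (sg _ t)) in T1.
    rewrite (dist_sym (sg _ (Lm - (M - t))) (xi t)) in T2. lra.
Qed.

End RayFromPoint.

Lemma asymptotic_ray_from_point xi x0 : proper_space d -> geodesic_ray d xi ->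
  exists c, geodesic_ray d c /\ c 0 = x0 /\ asymptotic d c xi.
Proof.
  intros Hp Hxi.
  destruct (choice (fun (n : nat) gam =>
    geodesic_segment d gam (d x0 (xi (INR n))) x0 (xi (INR n)))) as [sg Hsg];
    [intro n; apply Hgeod|].
  destruct (choice (fun t l => 0 <= t -> seq_converges d (fun n => sg n t) l)) as [c Hc].
  { intro t. destruct (Rle_dec 0 t) as [Ht|Ht].
    - destruct (segments_converge xi x0 sg Hxi Hsg t Hp Ht) as [l Hl]. exists l; auto.
    - exists x0. intro; lra. }
  assert (Hlen : forall T, exists N, forall n, (N <= n)%nat -> T <= d x0 (xi (INR n))).
  { intro T. destruct (eventually_ge_INR (T + d x0 (xi 0))) as [N HN]. exists N. intros n Hn.
    pose proof (ray_segment_length_near xi x0 Hxi n). specialize (HN n Hn). lra. }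
  destruct (segments_limit_ray sg _ _ x0 c Hsg Hlen Hc) as [Hray Hc0].
  exists c. repeat split; auto. exact (segments_limit_asymptotic xi x0 sg Hxi Hsg c Hray Hc0 Hc).
Qed.

(* The geodesic from [x] to [f y] shadows [gam] from both ends. *)
Lemma segment_displacement_le (f : X -> X) gam L x y delta t :
  (forall u v, d (f u) (f v) = d u v) ->
  geodesic_segment d gam L x y -> d x (f x) <= delta -> d y (f y) <= delta ->
  0 <= t <= L -> d (gam t) (f (gam t)) <= 3 * delta.
Proof.
  intros Hf Hgam Hx Hy Ht.
  pose proof (segment_length _ _ _ _ Hgam) as HL.
  assert (Hnear : forall z, d (gam t) z <= delta -> d z (f z) <= delta ->
                  d (gam t) (f (gam t)) <= 3 * delta).
  { intros z Hz Hfz. pose proof (dist_triangle (gam t) z (f (gam t))) as T1.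
    pose proof (dist_triangle z (f z) (f (gam t))) as T2.
    rewrite Hf, (dist_sym z (gam t)) in T2. lra. }
  destruct (Rle_dec t delta) as [Hsmall|Hsmall].
  { apply (Hnear x); [|exact Hx]. pose proof Hgam as [_ [H0 _]]. rewrite <- H0.
    rewrite (segment_dist _ _ _ _ t 0 Hgam) by lra. rewrite Rminus_0_r, Rabs_right; lra. }
  destruct (Rle_dec (L - delta) t) as [Hlarge|Hlarge].
  { apply (Hnear y); [|exact Hy]. pose proof Hgam as [_ [_ [H1 _]]]. rewrite <- H1.
    rewrite (segment_dist _ _ _ _ t L Hgam) by lra. rewrite Rabs_left1; lra. }
  destruct (Hgeod x (f y)) as [rho Hrho].
  set (L2 := d x (f y)) in *.
  assert (HL2 : L - delta <= L2 <= L + delta).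
  { pose proof (dist_triangle x (f y) y). pose proof (dist_triangle x (f x) (f y)).
    rewrite Hf, (dist_sym (f y)) in *. unfold L2. lra. }
  pose proof (cat0_common_origin_le _ _ _ gam rho L L2 t Hgam Hrho Ht ltac:(lra)) as Hfront.
  pose proof (cat0_common_origin_le _ _ _ _ _ L L2 (L - t)
    (segment_reverse _ _ _ _ (segment_isometry f _ _ _ _ Hf Hgam))
    (segment_reverse _ _ _ _ Hrho) ltac:(split; lra) ltac:(lra)) as Hback.
  unfold reverse_path in Hback. replace (L - (L - t)) with t in Hback by ring.
  pose proof (segment_dist _ _ _ _ t (L2 - (L - t)) Hrho ltac:(split; lra) ltac:(split; lra)) as Hmid.
  assert (Rabs (t - (L2 - (L - t))) <= delta) by (apply Rabs_le; lra).
  pose proof (dist_triangle (gam t) (rho t) (f (gam t))).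
  pose proof (dist_triangle (rho t) (rho (L2 - (L - t))) (f (gam t))).
  rewrite (dist_sym (f x) x) in Hback. rewrite (dist_sym (rho (L2 - (L - t)))) in *.
  lra.
Qed.

Lemma ray_cone_neighbourhood c x0 r eps E :
  geodesic_ray d c -> c 0 = x0 -> 0 < r -> 0 < eps ->
  exists T, forall s p, T <= s -> d p (c s) <= E ->
    r < d x0 p /\
    forall gam, geodesic_segment d gam (d x0 p) x0 p -> d (gam r) (c r) < eps.
Proof.
  intros Hc Hc0 Hr He.
  assert (Hk : 0 <= 2 * r ^ 2 * E ^ 2 / eps ^ 2).
  { apply Rmult_le_pos; [nra | left; apply Rinv_0_lt_compat; nra]. }
  exists (r + 2 * E + 1 + 2 * r ^ 2 * E ^ 2 / eps ^ 2). intros s p Hs Hp.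
  pose proof (dist_nonneg p (c s)) as HE.
  assert (Hcs : d x0 (c s) = s) by (rewrite <- Hc0, ray_dist; auto; lra).
  set (L := d x0 p).
  assert (HL : s - E <= L <= s + E).
  { pose proof (dist_triangle x0 p (c s)). pose proof (dist_triangle x0 (c s) p).
    rewrite (dist_sym (c s)) in *. unfold L. lra. }
  split; [lra|]. intros gam Hgam.
  pose proof (ray_segment c s Hc ltac:(lra)) as Hcseg. rewrite Hc0 in Hcseg.
  pose proof (cat0_common_origin _ _ _ _ _ s L r Hcseg Hgam
    ltac:(lra) ltac:(lra) ltac:(split; lra) ltac:(lra)) as Hcmp.
  (* The comparison bound [r^2 E^2 / (s L)] decays like [1/s]. *)
  assert (Hrhs : r ^ 2 * (d (c s) p ^ 2 - (s - L) ^ 2) <= r ^ 2 * E ^ 2).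
  { apply Rmult_le_compat_l; [apply pow2_ge_0|].
    rewrite dist_sym. pose proof (pow2_ge_0 (s - L)). nra. }
  assert (Hs2 : 2 * r ^ 2 * E ^ 2 < eps ^ 2 * s).
  { replace (2 * r ^ 2 * E ^ 2) with (2 * r ^ 2 * E ^ 2 / eps ^ 2 * eps ^ 2) by (field; lra).
    rewrite (Rmult_comm (eps ^ 2)). apply Rmult_lt_compat_r; [nra | lra]. }
  assert (HsL : s <= 2 * (s * L)) by nra.
  assert (d (c r) (gam r) ^ 2 < eps ^ 2).
  { apply (Rmult_lt_reg_r (s * L)); [nra|]. nra. }
  rewrite dist_sym. pose proof (dist_nonneg (c r) (gam r)). nra.
Qed.
End Metric.

Section Group.
Context {G : Type} (mul : G -> G -> G) (inv : G -> G) (one : G).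
Hypothesis Hgr : is_group mul inv one.

Lemma mul_inv_cancel_l p x : mul p (mul (inv p) x) = x.
Proof. destruct Hgr as [Ha [H1l [_ [_ Hir]]]]. rewrite Ha, Hir, H1l. reflexivity. Qed.

Lemma conjugate_eq_centralizer g p q :
  mul (inv p) (mul g p) = mul (inv q) (mul g q) -> centralizer mul g (mul p (inv q)).
Proof.
  intros E. unfold centralizer. destruct Hgr as [Ha [_ [H1r [_ Hir]]]].
  assert (E2 : mul g p = mul p (mul (inv q) (mul g q))) by (rewrite <- E, mul_inv_cancel_l; auto).
  rewrite Ha, E2, <- !Ha, Hir, H1r. reflexivity.
Qed.
End Group.

Section Action.
Context {G X : Type} (d : X -> X -> R).
Context (mul : G -> G -> G) (inv : G -> G) (one : G) (act : G -> X -> X).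
Hypothesis Hm : is_metric d.
Hypothesis Hgr : is_group mul inv one.
Hypothesis Hiso : isometric_action d mul one act.

Lemma act_mul g h x : act (mul g h) x = act g (act h x).
Proof. apply (proj1 (proj2 Hiso)). Qed.

Lemma act_isometry g x y : d (act g x) (act g y) = d x y.
Proof. apply (proj2 (proj2 Hiso)). Qed.

Lemma act_inv_cancel_l h y : act h (act (inv h) y) = y.
Proof.
  destruct Hgr as [_ [_ [_ [_ Hir]]]]. rewrite <- act_mul, Hir. apply (proj1 Hiso).
Qed.

(* Properness of the space extracts a convergent subsequence of [f n k0]; properness
   of the action then leaves only finitely many candidates for its terms. *)
Lemma bounded_displacement_recurs k0 C (f : nat -> G) :
  proper_space d -> proper_action d act ->
  (forall n, d k0 (act (f n) k0) <= C) ->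
  exists a, forall N, exists n, (N <= n)%nat /\ f n = a.
Proof.
  intros Hp Hpa Hf.
  destruct (Hp k0 C (fun n => act (f n) k0) Hf) as [phi [l [Hphi [_ Hl]]]].
  destruct (Hpa k0) as [r0 [Hr0 [lst Hlst]]].
  destruct (Hl (r0 / 2) ltac:(lra)) as [I HI].
  set (fI := f (phi I)).
  destruct (list_valued_infinitely_often (map (mul fI) lst) (fun i => f (phi i)) I) as [a Ha].
  { intros i Hi. cbn beta.
    rewrite <- (mul_inv_cancel_l mul inv one Hgr fI (f (phi i))).
    apply in_map, Hlst. exists k0. split; [rewrite dist_refl; auto|].
    rewrite <- (act_isometry fI), <- act_mul, (mul_inv_cancel_l mul inv one Hgr).
    pose proof (HI i Hi). pose proof (HI I (le_n _)). cbn beta in *.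
    pose proof (dist_triangle d Hm (act fI k0) l (act (f (phi i)) k0)).
    rewrite (dist_sym d Hm l (act (f (phi i)) k0)) in *. unfold fI in *. lra. }
  exists a. intros N. destruct (Ha N) as [i [Hi Ei]]. exists (phi i). split; [|exact Ei].
  pose proof (strictly_increasing_ge phi Hphi i). lia.
Qed.

(* Writing [xi n = h_n y_n] with [y_n] in the compact [K], the conjugates [h_n^-1 g h_n]
   move [x0] boundedly, so one of them recurs, and [h_n h_m^-1] centralizes [g]. *)
Lemma centralizer_orbit_near_fixed_ray x0 g xi :
  proper_space d -> proper_action d act -> cocompact_action d act ->
  fixes_boundary_point d act g xi ->
  exists B, forall N, exists a n,
    centralizer mul g a /\ (N <= n)%nat /\ d (act a x0) (xi (INR n)) <= B.
Proof.
  intros Hp Hpa [K [HK Hcov]] [C HC].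
  destruct (compact_set_bounded d Hm K x0 HK) as [RK HRK].
  destruct (choice (fun (n : nat) (p : G * X) => K (snd p) /\ xi (INR n) = act (fst p) (snd p)))
    as [hy Hhy].
  { intro n. destruct (Hcov (xi (INR n))) as [h [y [Hy E]]]. exists (h, y); auto. }
  set (f := fun n => mul (inv (fst (hy n))) (mul g (fst (hy n)))).
  assert (Hf : forall n, d x0 (act (f n) x0) <= RK + C + RK).
  { intro n. destruct (Hhy n) as [Ky Exi].
    set (h := fst (hy n)) in *. set (y := snd (hy n)) in *.
    assert (Hmove : d y (act (f n) y) <= C).
    { unfold f. fold h. rewrite !act_mul, <- (act_isometry h), act_inv_cancel_l, <- Exi, (dist_sym d Hm).
      apply HC, pos_INR. }
    pose proof (dist_triangle d Hm x0 y (act (f n) x0)).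
    pose proof (dist_triangle d Hm y (act (f n) y) (act (f n) x0)).
    rewrite act_isometry, (dist_sym d Hm y x0) in *. pose proof (HRK y Ky). lra. }
  destruct (bounded_displacement_recurs _ _ _ Hp Hpa Hf) as [fs Hfs].
  destruct (Hfs 0%nat) as [m0 [_ Em0]].
  exists (d (act (inv (fst (hy m0))) x0) x0 + RK). intros N.
  destruct (Hfs N) as [n [Hn En]].
  exists (mul (fst (hy n)) (inv (fst (hy m0)))), n. split; [|split; [exact Hn|]].
  - apply (conjugate_eq_centralizer mul inv one Hgr). unfold f in En, Em0. congruence.
  - destruct (Hhy n) as [Ky ->]. rewrite act_mul, act_isometry.
    pose proof (dist_triangle d Hm (act (inv (fst (hy m0))) x0) x0 (snd (hy n))).
    pose proof (HRK _ Ky). lra.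
Qed.

Hypothesis Hgeod : geodesic_space d.
Hypothesis Hcat : CAT0_ineq d.

(* [g] moves the endpoint [a x0] of each cone segment as little as it moves [x0],
   hence moves the whole segment, and with it the ray [c], boundedly. *)
Lemma centralizer_limit_point_fixed x0 g xi :
  in_limit_set d act x0 (centralizer mul g) xi -> fixes_boundary_point d act g xi.
Proof.
  intros [c [Hc [Hc0 [[C1 HC1] Hcone]]]].
  set (dl := d x0 (act g x0)).
  assert (Hmove : forall t, 0 <= t -> d (c t) (act g (c t)) <= 3 * dl + 2).
  { intros t Ht.
    destruct (Hcone (t + 1) 1 ltac:(lra) ltac:(lra)) as [a [Ha [Hr [sg [Hsg Hsc]]]]].
    pose proof (ray_segment d c (t + 1) Hc ltac:(lra)) as Hcseg. rewrite Hc0 in Hcseg.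
    pose proof (cat0_common_origin_le d Hm Hgeod Hcat _ _ _ _ _ _ _ t
      (segment_restrict d sg _ _ _ (t + 1) Hsg ltac:(split; lra)) Hcseg
      ltac:(split; lra) ltac:(lra)) as Hclose.
    assert (Hend : d (act a x0) (act g (act a x0)) <= dl).
    { rewrite <- act_mul, Ha, act_mul, act_isometry. unfold dl. lra. }
    pose proof (segment_displacement_le d Hm Hgeod Hcat (act g) sg _ _ _ dl t
      (act_isometry g) Hsg ltac:(unfold dl; lra) Hend ltac:(split; lra)) as Hdisp.
    pose proof (dist_triangle d Hm (c t) (sg t) (act g (c t))).
    pose proof (dist_triangle d Hm (sg t) (act g (sg t)) (act g (c t))).
    rewrite act_isometry, (dist_sym d Hm (c t) (sg t)) in *. lra. }
  exists (2 * C1 + 3 * dl + 2). intros t Ht. cbn beta.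
  pose proof (dist_triangle d Hm (act g (xi t)) (act g (c t)) (xi t)) as T1.
  pose proof (dist_triangle d Hm (act g (c t)) (c t) (xi t)) as T2.
  pose proof (HC1 t Ht). pose proof (Hmove t Ht).
  rewrite act_isometry, (dist_sym d Hm (xi t) (c t)) in T1.
  rewrite (dist_sym d Hm (act g (c t)) (c t)) in T2. lra.
Qed.

Lemma fixed_point_in_centralizer_limit_set x0 g xi :
  proper_space d -> proper_action d act -> cocompact_action d act -> geodesic_ray d xi ->
  fixes_boundary_point d act g xi -> in_limit_set d act x0 (centralizer mul g) xi.
Proof.
  intros Hp Hpa Hcc Hxi Hfix.
  destruct (asymptotic_ray_from_point d Hm Hgeod Hcat xi x0 Hp Hxi) as [c [Hc [Hc0 [C1 HC1]]]].
  destruct (centralizer_orbit_near_fixed_ray x0 g xi Hp Hpa Hcc Hfix) as [B HB].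
  exists c. repeat split; auto; [exists C1; exact HC1|].
  intros r eps Hr He.
  destruct (ray_cone_neighbourhood d Hm Hgeod Hcat c x0 r eps (B + C1) Hc Hc0 Hr He) as [T HT].
  destruct (eventually_ge_INR T) as [N HN].
  destruct (HB N) as [a [n [Ha [Hn Hdist]]]].
  destruct (HT (INR n) (act a x0) (HN n Hn)) as [Hfar Hclose].
  { pose proof (dist_triangle d Hm (act a x0) (xi (INR n)) (c (INR n))).
    pose proof (HC1 (INR n) (pos_INR n)). rewrite (dist_sym d Hm (xi (INR n))) in *. lra. }
  exists a. repeat split; auto.
  destruct (Hgeod x0 (act a x0)) as [sg Hsg]. exists sg. auto.
Qed.
End Action.

Theorem theorem1 (X G : Type) (d : X -> X -> R)
  (mul : G -> G -> G) (inv : G -> G) (one : G) (act : G -> X -> X) :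
  CAT0_space d -> proper_space d ->
  is_group mul inv one ->
  geometric_action d mul one act ->
  forall (x0 : X) (g : G) (xi : R -> X),
    geodesic_ray d xi ->
    (fixes_boundary_point d act g xi <-> in_limit_set d act x0 (centralizer mul g) xi).
Proof.
  intros [Hm [Hgeod Hcat]] Hp Hgr [Hiso [Hpa Hcc]] x0 g xi Hxi. split.
  - exact (fixed_point_in_centralizer_limit_set d mul inv one act Hm Hgr Hiso Hgeod Hcat
             x0 g xi Hp Hpa Hcc Hxi).
  - exact (centralizer_limit_point_fixed d mul one act Hm Hiso Hgeod Hcat x0 g xi).
Qed.
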